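(* Let $(K_n,\Sigma)$ be a signed complete graph with $n\geq4$, and let $X(\Sigma)$ be the set of edges $vw$ of $K_n$ such that the triangle $uvw$ is even for every $u\in V(K_n)\setminus\{v,w\}$. Then there exists a signed complete graph $(K_k,\Sigma')$ with vertex set $\{v_1,\dots,v_k\}$ and complete graphs $H_1,\dots,H_k$ with $V(H_1),\dots,V(H_k)$ a partition of $V(K_n)$, such that $(K_n,\Sigma)$ is switching equivalent to the signed graph obtained from $(K_k,\Sigma')$ by substituting $v_i$ with $(H_i,\emptyset)$ for each $i\in[k]$, and $X(\Sigma)=\bigcup_{i=1}^kE(H_i)$.
   Context: A signed graph is a pair $(G,\Sigma)$ with $G$ a finite simple graph and $\Sigma\subseteq E(G)$ (odd edges; the others are even). A triangle $uvw$ is odd (resp. even) if $|\Sigma\cap\{uv,uw,vw\}|$ is odd (resp. even). Switching at a vertex $v$ replaces $\Sigma$ by $\Sigma\triangle\delta(v)$, where $\delta(v)$ is the set of edges incident with $v$; two signed graphs are switching equivalent if one is obtained from the other by a sequence of switchings. Substituting every vertex $v_i$ of $(K_k,\Sigma')$ with $(H_i,\emptyset)$ yields the signed complete graph on $\bigcup_iV(H_i)$ in which edges inside each $V(H_i)$ are even and every edge between $V(H_i)$ and $V(H_j)$ ($i\neq j$) is odd iff $v_iv_j\in\Sigma'$. *)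

From mathcomp Require Import all_boot.
Set Implicit Arguments. Unset Strict Implicit. Unset Printing Implicit Defensive.

Definition cedges (T : finType) : {set {set T}} := [set e : {set T} | #|e| == 2].

(* A signed complete graph (K_T, S): S is a set of edges (the odd edges). *)
Definition signed_complete (T : finType) (S : {set {set T}}) : Prop :=
  S \subset cedges T.

Definition odd_triangle (T : finType) (S : {set {set T}}) (u v w : T) : bool :=
  odd #|S :&: [set [set u; v]; [set u; w]; [set v; w]]|.

Definition delta (T : finType) (v : T) : {set {set T}} :=
  [set e in cedges T | v \in e].

Definition symdiff (T : finType) (A B : {set T}) : {set T} := (A :\: B) :|: (B :\: A).

Definition switch (T : finType) (S : {set {set T}}) (v : T) : {set {set T}} :=
  symdiff S (delta v).

Definition switching_equiv (T : finType) (S1 S2 : {set {set T}}) : Prop :=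
  exists s : seq T, foldl (@switch T) S1 s = S2.

Definition Xset (T : finType) (S : {set {set T}}) : {set {set T}} :=
  [set e in cedges T | [forall u, forall v, forall w,
     ((e == [set v; w]) && (u \notin e)) ==> ~~ odd_triangle S u v w]].

(* Substitution: vertex i of (K_k, S') replaced by the complete graph H_i with
   vertex set f^-1(i) (all edges even); edges between H_i and H_j (i <> j)
   are odd iff {i,j} is in S'. *)
Definition substitute (T : finType) (k : nat) (S' : {set {set 'I_k}})
  (f : T -> 'I_k) : {set {set T}} :=
  [set e in cedges T | [exists x, exists y,
     [&& e == [set x; y], f x != f y & [set f x; f y] \in S']]].

Definition block_edges (T : finType) (k : nat) (f : T -> 'I_k) (i : 'I_k)
  : {set {set T}} :=
  [set e in cedges T | e \subset f @^-1: [set i]].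

From mathcomp Require Import all_boot.
Set Implicit Arguments.
Unset Strict Implicit. Unset Printing Implicit Defensive.

(* Call v and w equivalent when v = w or vw is in X(S).  This is an
   equivalence relation: on four vertices the parities of the four triangles
   sum to zero, since every edge lies in exactly two of them.  Pick a
   representative r in each class and switch at every non-representative v
   for which rv is odd.  Switching preserves triangle parities, so X is
   unchanged, and afterwards every edge rv inside a class is even; the parity
   of a triangle r v w inside a class then forces vw to be even, and the
   parity of a triangle v v' w with v ~ v' and w in another class forces vw
   and v'w to have the same sign.  The resulting signature is therefore a
   substitution of even complete graphs on the classes into the quotient. *)

Section Pairs.

Variable T : finType.

Lemma set2C (a b : T) : [set a; b] = [set b; a].
Proof. by rewrite setUC. Qed.

Lemma imset_set2 (U : finType) (f : T -> U) (a b : T) :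
  f @: [set a; b] = [set f a; f b].
Proof. by rewrite imsetU1 imset_set1. Qed.

Lemma eq_set2 (a b v w : T) : [set v; w] = [set a; b] ->
  v != w -> (v = a /\ w = b) \/ (v = b /\ w = a).
Proof.
move=> E vw.
have /set2P vab : v \in [set a; b] by rewrite -E set21.
have /set2P wab : w \in [set a; b] by rewrite -E set22.
by case: vab wab vw => -> [] ->; rewrite ?eqxx; auto.
Qed.

Lemma card_setI_sum (S A : {set T}) : #|S :&: A| = \sum_(x in A) (x \in S).
Proof.
rewrite -sum1_card (eq_bigl (fun x => (x \in A) && (x \in S))) => [|x].
  by rewrite big_mkcondr; apply: eq_bigr => x _; case: (x \in S).
by rewrite !inE andbC.
Qed.

Lemma card_setI3 (S : {set T}) (x y z : T) :
  x != y -> x != z -> y != z ->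
  #|S :&: [set x; y; z]| = (x \in S) + (y \in S) + (z \in S).
Proof.
move=> xy xz yz; rewrite card_setI_sum -setUA big_setU1 /=; last first.
  by rewrite !inE negb_or xy xz.
by rewrite big_setU1 ?big_set1 ?addnA // inE.
Qed.

Lemma eq_edge_sets (A B : {set {set T}}) :
  A \subset cedges T -> B \subset cedges T ->
  (forall a b, a != b -> ([set a; b] \in A) = ([set a; b] \in B)) -> A = B.
Proof.
move=> /subsetP sA /subsetP sB eqAB; apply/setP=> e.
case ce: (e \in cedges T); last first.
  by apply/idP/idP=> [/sA | /sB]; rewrite ce.
by move: ce; rewrite inE => /cards2P[a [b [ab ->]]]; apply: eqAB.
Qed.

End Pairs.

Section Triangles.

Variables (T : finType) (S : {set {set T}}).

Definition odd_edge (a b : T) : bool := [set a; b] \in S.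

Lemma odd_edgeC a b : odd_edge a b = odd_edge b a.
Proof. by rewrite /odd_edge set2C. Qed.

Lemma odd_triangleC u a b : odd_triangle S u a b = odd_triangle S u b a.
Proof.
rewrite /odd_triangle (set2C b a).
by congr (odd #|_ :&: (_ :|: _)|); apply: setUC.
Qed.

Lemma odd_triangleE u a b : u != a -> u != b -> a != b ->
  odd_triangle S u a b = odd_edge u a (+) odd_edge u b (+) odd_edge a b.
Proof.
move=> ua ub ab.
have pair_neq (x : T) (A B : {set T}) : x \in A -> x \notin B -> A != B.
  by move=> xA; apply: contra => /eqP <-.
rewrite /odd_triangle card_setI3 ?oddD ?oddb //.
- by apply: (pair_neq a); rewrite !inE ?eqxx ?orbT // eq_sym (negbTE ua).
- by apply: (pair_neq u); rewrite !inE ?eqxx // negb_or ua.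
- by apply: (pair_neq u); rewrite !inE ?eqxx // negb_or ua.
Qed.

Lemma odd_triangle_K4 u a b c :
  u != a -> u != b -> u != c -> a != b -> a != c -> b != c ->
  odd_triangle S u a c =
    odd_triangle S u a b (+) odd_triangle S u b c (+) odd_triangle S a b c.
Proof.
move=> *; rewrite !odd_triangleE //.
by case: (odd_edge u a); case: (odd_edge u b); case: (odd_edge u c);
   case: (odd_edge a b); case: (odd_edge a c); case: (odd_edge b c).
Qed.

Definition xedge (a b : T) : bool :=
  (a != b) && [forall u, (u != a) && (u != b) ==> ~~ odd_triangle S u a b].

Lemma in_XsetE a b : a != b -> ([set a; b] \in Xset S) = xedge a b.
Proof.
move=> ab; rewrite /Xset /xedge inE inE cards2 ab /=.
apply/forallP/forallP=> [H u | H u].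
  apply/implyP=> /andP[ua ub].
  move/forallP/(_ a)/forallP/(_ b)/implyP: (H u); apply.
  by rewrite eqxx !inE negb_or ua ub.
apply/forallP=> v; apply/forallP=> w; apply/implyP=> /andP[/eqP E].
have vw : v != w by have := cards2 v w; rewrite -E cards2 ab; case: (v != w).
rewrite !inE negb_or => /andP[ua ub].
move/implyP: (H u); rewrite ua ub => /(_ isT).
by case: (eq_set2 (esym E) vw) => -[-> ->]; rewrite // odd_triangleC.
Qed.

End Triangles.

Section Switching.

Variable T : finType.
Implicit Types (S : {set {set T}}) (s : seq T).

Lemma mem_foldl_switch S s e :
  (e \in foldl (@switch T) S s) =
  (e \in S) (+) ((e \in cedges T) && odd (count (mem e) s)).
Proof.
elim: s S => [|v s IH] S /=; first by rewrite andbF addbF.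
rewrite IH /switch /symdiff /delta !inE oddD oddb.
by case: (e \in S); case: (#|e| == 2); case: (v \in e); case: (odd _).
Qed.

Lemma foldl_switch_sub S s :
  S \subset cedges T -> foldl (@switch T) S s \subset cedges T.
Proof.
move=> /subsetP sS; apply/subsetP=> e; rewrite mem_foldl_switch.
by case ce: (e \in cedges T); rewrite ?andbF ?addbF // => /sS; rewrite ce.
Qed.

Lemma odd_edge_foldl_switch S s a b : a != b ->
  odd_edge (foldl (@switch T) S s) a b =
    odd_edge S a b (+) odd (count_mem a s) (+) odd (count_mem b s).
Proof.
move=> ab; rewrite /odd_edge mem_foldl_switch inE cards2 ab /= -addbA -oddD.
congr (_ (+) odd _); rewrite -(count_predUI (pred1 a) (pred1 b)).
rewrite (@eq_count _ (predI _ _) pred0) ?count_pred0 ?addn0.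
  by apply: eq_count => v; rewrite !inE.
by move=> v /=; case: (eqVneq v a) => // ->; rewrite (negbTE ab).
Qed.

Lemma odd_triangle_foldl_switch S s u a b :
  u != a -> u != b -> a != b ->
  odd_triangle (foldl (@switch T) S s) u a b = odd_triangle S u a b.
Proof.
move=> ua ub ab; rewrite !odd_triangleE // !odd_edge_foldl_switch //.
by case: (odd_edge S u a); case: (odd_edge S u b); case: (odd_edge S a b);
   case: (odd (count_mem u s)); case: (odd (count_mem a s));
   case: (odd (count_mem b s)).
Qed.

End Switching.

Section Substitution.

Variables (T : finType) (k : nat) (S' : {set {set 'I_k}}) (f : T -> 'I_k).

Lemma substitute_sub : substitute S' f \subset cedges T.
Proof. by apply/subsetP=> e; rewrite inE => /andP[]. Qed.

Lemma in_substituteE a b : a != b ->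
  ([set a; b] \in substitute S' f) = (f a != f b) && ([set f a; f b] \in S').
Proof.
move=> ab; rewrite inE inE cards2 ab /=; apply/existsP/andP.
  case=> x /existsP[y /and3P[/eqP E fxy S'xy]].
  have Ef : [set f a; f b] = [set f x; f y] by rewrite -!imset_set2 E.
  rewrite Ef S'xy; split=> //.
  by have := cards2 (f a) (f b); rewrite Ef cards2 fxy; case: (f a != f b).
by case=> fab S'ab; exists a; apply/existsP; exists b; rewrite eqxx fab.
Qed.

Lemma bigcup_block_edges_sub : \bigcup_(i < k) block_edges f i \subset cedges T.
Proof. by apply/bigcupsP=> i _; apply/subsetP=> e; rewrite inE => /andP[]. Qed.

Lemma in_bigcup_block_edgesE a b : a != b ->
  ([set a; b] \in \bigcup_(i < k) block_edges f i) = (f a == f b).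
Proof.
move=> ab; apply/bigcupP/eqP=> [[i _]|fab].
  rewrite inE => /andP[_ /subsetP sub].
  move: (sub a (set21 a b)) (sub b (set22 a b)).
  by rewrite !inE => /eqP-> /eqP->.
exists (f a) => //; rewrite inE inE cards2 ab /=.
by apply/subsetP=> v /set2P[] ->; rewrite !inE ?fab.
Qed.

End Substitution.

Lemma factor_through_ord (T U : finType) (x0 : T) (h : T -> U) :
  exists k (f : T -> 'I_k) (g : 'I_k -> U),
    [/\ forall i, exists x, f x = i, injective g & forall x, g (f x) = h x].
Proof.
have hx0 : h x0 \in h @: T by apply: imset_f.
exists #|h @: T|, (fun x => enum_rank_in hx0 (h x)), enum_val; split.
- move=> i; have /imsetP[x _ hx] := enum_valP i.
  by exists x; rewrite -hx enum_valK_in.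
- exact: enum_val_inj.
- by move=> x; rewrite enum_rankK_in ?imset_f.
Qed.

Section Normalization.

Variables (T : finType) (S : {set {set T}}).

Definition same_block (a b : T) : bool := (a == b) || xedge S a b.

Lemma same_block_refl : reflexive same_block.
Proof. by move=> a; rewrite /same_block eqxx. Qed.

Lemma same_blockC : symmetric same_block.
Proof.
move=> a b; rewrite /same_block /xedge eq_sym; congr (_ || (_ && _)).
by apply/eq_forallb=> u; rewrite andbC odd_triangleC.
Qed.

Lemma same_block_trans : transitive same_block.
Proof.
move=> b a c; rewrite {1}/same_block => /orP[/eqP->//|/andP[ab /forallP Hab]].
rewrite {1}/same_block => /orP[/eqP<-|/andP[bc /forallP Hbc]].
  by rewrite /same_block /xedge ab; apply/orP; right; apply/forallP.
case: (eqVneq a c) => [->|ac]; first exact: same_block_refl.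
apply/orP; right; apply/andP; split=> //; apply/forallP=> u.
apply/implyP=> /andP[ua uc]; case: (eqVneq u b) => [->|ub].
  move/implyP: (Hab c); rewrite eq_sym ac eq_sym bc => /(_ isT).
  rewrite !odd_triangleE // 1?eq_sym // (odd_edgeC S b a) (odd_edgeC S c a)
    (odd_edgeC S c b).
  by case: (odd_edge S a b); case: (odd_edge S b c); case: (odd_edge S a c).
move/implyP: (Hab u); rewrite ua ub => /(_ isT).
move/implyP: (Hbc u); rewrite ub uc => /(_ isT).
move/implyP: (Hbc a); rewrite ab ac => /(_ isT).
rewrite (odd_triangle_K4 S ua ub uc ab ac bc).
by case: (odd_triangle S a b c); case: (odd_triangle S u b c);
   case: (odd_triangle S u a b).
Qed.

Definition block_rep (a : T) : T := odflt a [pick b | same_block a b].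

Lemma same_block_rep a : same_block a (block_rep a).
Proof.
by rewrite /block_rep; case: pickP => [b|] //=; rewrite same_block_refl.
Qed.

Lemma block_rep_eq a b : same_block a b -> block_rep a = block_rep b.
Proof.
move=> ab; rewrite /block_rep (@eq_pick _ _ (same_block b)) => [|c].
  by case: pickP => //= /(_ a); rewrite same_blockC ab.
apply/idP/idP; last exact: same_block_trans.
by apply: same_block_trans; rewrite same_blockC.
Qed.

Lemma same_blockE a b : same_block a b = (block_rep a == block_rep b).
Proof.
apply/idP/eqP=> [|E]; first exact: block_rep_eq.
apply: same_block_trans (same_block_rep a) _.
by rewrite E same_blockC same_block_rep.
Qed.

Lemma block_rep_id a : block_rep (block_rep a) = block_rep a.
Proof. by apply/esym/block_rep_eq/same_block_rep. Qed.

Definition switch_set : {set T} :=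
  [set v | (block_rep v != v) && odd_edge S (block_rep v) v].

Definition normalized : {set {set T}} := foldl (@switch T) S (enum switch_set).

Lemma odd_edge_normalized a b : a != b ->
  odd_edge normalized a b =
    odd_edge S a b (+) (a \in switch_set) (+) (b \in switch_set).
Proof.
move=> ab; rewrite /normalized odd_edge_foldl_switch //.
by rewrite !count_uniq_mem ?enum_uniq // !mem_enum !oddb.
Qed.

Lemma even_rep_edge v :
  block_rep v != v -> ~~ odd_edge normalized (block_rep v) v.
Proof.
move=> rv; rewrite odd_edge_normalized // !inE block_rep_id eqxx rv /=.
by case: (odd_edge S _ v).
Qed.

Lemma even_block_edge a b :
  a != b -> same_block a b -> ~~ odd_edge normalized a b.
Proof.
move=> ab sab; set r := block_rep a.
have rb : block_rep b = r by rewrite /r (block_rep_eq sab).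
have even_ra : r != a -> ~~ odd_edge normalized r a by exact: even_rep_edge.
have even_rb : r != b -> ~~ odd_edge normalized r b.
  by rewrite -rb; exact: even_rep_edge.
case: (eqVneq r a) => [ra|ar]; first by rewrite -ra; apply: even_rb; rewrite ra.
case: (eqVneq r b) => [rb'|br].
  by rewrite odd_edgeC -rb'; apply: even_ra; rewrite rb' eq_sym.
move: sab; rewrite /same_block (negbTE ab) => /andP[_ /forallP/(_ r)/implyP].
rewrite ar br => /(_ isT).
rewrite -(odd_triangle_foldl_switch _ (enum switch_set)) // -/normalized.
rewrite odd_triangleE //.
move: (even_ra ar) (even_rb br).
by case: (odd_edge _ r a); case: (odd_edge _ r b).
Qed.

Lemma odd_edge_normalized_block a a' b : same_block a a' -> ~~ same_block a b ->
  odd_edge normalized a b = odd_edge normalized a' b.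
Proof.
move=> saa' nsab; case: (eqVneq a a') => [<-//|aa'].
have ba : b != a by apply: contraNneq nsab => ->; apply: same_block_refl.
have ba' : b != a' by apply: contraNneq nsab => ->.
have even_aa' := even_block_edge aa' saa'.
move: saa'; rewrite /same_block (negbTE aa') => /andP[_ /forallP/(_ b)/implyP].
rewrite ba ba' => /(_ isT).
rewrite -(odd_triangle_foldl_switch _ (enum switch_set)) // -/normalized.
rewrite odd_triangleE // (odd_edgeC _ a b) (odd_edgeC _ a' b).
by move: even_aa'; case: (odd_edge _ a a'); case: (odd_edge _ b a);
   case: (odd_edge _ b a').
Qed.

Lemma odd_cross_edge a b : ~~ same_block a b ->
  odd_edge normalized a b = odd_edge normalized (block_rep a) (block_rep b).
Proof.
move=> nsab; rewrite (odd_edge_normalized_block (same_block_rep a) nsab).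
have nsba : ~~ same_block b (block_rep a).
  by rewrite same_blockE block_rep_id eq_sym -same_blockE.
rewrite odd_edgeC (odd_edge_normalized_block (same_block_rep b) nsba).
by rewrite odd_edgeC.
Qed.

End Normalization.

Theorem substitution_decomposition (T : finType) (x0 : T) (S : {set {set T}}) :
  signed_complete S ->
  exists (k : nat) (S' : {set {set 'I_k}}) (f : T -> 'I_k),
    [/\ signed_complete S',
        (forall i : 'I_k, exists x : T, f x = i),
        switching_equiv S (substitute S' f)
      & Xset S = \bigcup_(i < k) block_edges f i].
Proof.
move=> sS.
have [k [f [g [f_onto g_inj gf]]]] := factor_through_ord x0 (block_rep S).
have f_block a b : (f a == f b) = same_block S a b.
  by rewrite same_blockE -!gf (inj_eq g_inj).
exists k, [set e in cedges 'I_k | g @: e \in normalized S], f; split=> //.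
- by apply/subsetP=> e; rewrite inE => /andP[].
- exists (enum (switch_set S)); apply: eq_edge_sets => [||a b ab].
  + exact: foldl_switch_sub.
  + exact: substitute_sub.
  rewrite in_substituteE // f_block -/(normalized S).
  case: (boolP (same_block S a b)) => [sab|nsab] /=.
    by apply/negbTE/even_block_edge.
  rewrite inE inE cards2 f_block nsab imset_set2 !gf.
  exact: odd_cross_edge.
- apply: eq_edge_sets => [||a b ab].
  + by apply/subsetP=> e; rewrite inE => /andP[].
  + exact: bigcup_block_edges_sub.
  rewrite in_XsetE // in_bigcup_block_edgesE // f_block.
  by rewrite /same_block (negbTE ab).
Qed.

Theorem lemma3p7 (n : nat) (S : {set {set 'I_n}}) :
  4 <= n -> signed_complete S ->
  exists (k : nat) (S' : {set {set 'I_k}}) (f : 'I_n -> 'I_k),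
    [/\ signed_complete S',
        (forall i : 'I_k, exists x : 'I_n, f x = i),
        switching_equiv S (substitute S' f)
      & Xset S = \bigcup_(i < k) block_edges f i].
Proof.
move=> n4; have n_gt0 : 0 < n by apply: leq_trans n4.
exact: (@substitution_decomposition _ (Ordinal n_gt0) S).
Qed.
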